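(* A nanoword over $\alpha$ of length $\le4$ is homotopically skew-symmetric if and only if it is contractible. A nanoword of length $\le4$ is homotopically symmetric if and only if it is contractible or symmetric.
   Context: Fix a set $\alpha$ with an involution $\tau$. An $\alpha$-alphabet is a set $\mathcal A$ with a map $A\mapsto|A|\in\alpha$. A nanoword over $\alpha$ is a pair $(\mathcal A,w)$ with $\mathcal A$ a finite $\alpha$-alphabet and $w$ a word in which each letter of $\mathcal A$ occurs exactly twice; its length is the length of $w$. Nanowords $(\mathcal A_1,w_1),(\mathcal A_2,w_2)$ are isomorphic if a bijection $f:\mathcal A_1\to\mathcal A_2$ with $|f(A)|=|A|$ carries $w_1$ letterwise to $w_2$. Homotopy moves ($x,y,z,t$ words in the remaining letters): (1) $(\mathcal A,xAAy)\mapsto(\mathcal A\setminus\{A\},xy)$; (2) $(\mathcal A,xAByBAz)\mapsto(\mathcal A\setminus\{A,B\},xyz)$ if $|B|=\tau(|A|)$; (3) $(\mathcal A,xAByACzBCt)\mapsto(\mathcal A,xBAyCAzCBt)$ if $A,B,C$ distinct with $|A|=|B|=|C|$. Homotopy ($\simeq$) is generated by isomorphisms, these moves and inverses; contractible means homotopic to the empty nanoword. The opposite of $(\mathcal A,w)$ is $w^-=(\mathcal A,\text{$w$ read backwards})$; the inverse is $\overline w=(\overline{\mathcal A},w)$, where $\overline{\mathcal A}$ is the set $\mathcal A$ with projection $A\mapsto\tau(|A|)$. $w$ is symmetric if it is isomorphic to $w^-$, homotopically symmetric if $w\simeq w^-$, and homotopically skew-symmetric if $w\simeq\overline w^-$.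 *)

From Stdlib Require Import Relations.Relation_Operators.
From mathcomp Require Import all_boot.
Set Implicit Arguments. Unset Strict Implicit. Unset Printing Implicit Defensive.

(* A nanoword is a word [nw_word] in which each
   occurring letter occurs exactly twice, together with a projection
   [nw_proj] to alpha, defined (= Some _) on every letter of the word; the
   alphabet of the nanoword is the set of letters occurring in the word.
   Values of [nw_proj] outside the alphabet are irrelevant (all notions below
   only look at letters of the word). *)
Record nanoword (alpha : Type) := Nanoword {
  nw_word : seq nat;
  nw_proj : nat -> option alpha;
  nw_valid : all (fun a => (count_mem a nw_word == 2) && isSome (nw_proj a)) nw_word
}.

Section Nanowords.
Variables (alpha : Type) (tau : alpha -> alpha).

Definition nw_length (w : nanoword alpha) : nat := size (nw_word w).

Definition nw_iso (w1 w2 : nanoword alpha) : Prop :=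
  exists f : nat -> nat,
    {in nw_word w1 &, injective f} /\
    map f (nw_word w1) = nw_word w2 /\
    {in nw_word w1, forall a, nw_proj w2 (f a) = nw_proj w1 a}.

Definition same_proj (w1 w2 : nanoword alpha) : Prop :=
  {in nw_word w2, forall a, nw_proj w2 a = nw_proj w1 a}.

Definition move1 (w1 w2 : nanoword alpha) : Prop :=
  exists (A : nat) (x y : seq nat),
    nw_word w1 = x ++ [:: A; A] ++ y /\ nw_word w2 = x ++ y /\ same_proj w1 w2.

Definition move2 (w1 w2 : nanoword alpha) : Prop :=
  exists (A B : nat) (x y z : seq nat),
    nw_word w1 = x ++ [:: A; B] ++ y ++ [:: B; A] ++ z /\
    A != B /\
    nw_proj w1 B = omap tau (nw_proj w1 A) /\
    nw_word w2 = x ++ y ++ z /\ same_proj w1 w2.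

Definition move3 (w1 w2 : nanoword alpha) : Prop :=
  exists (A B C : nat) (x y z t : seq nat),
    nw_word w1 = x ++ [:: A; B] ++ y ++ [:: A; C] ++ z ++ [:: B; C] ++ t /\
    [&& A != B, A != C & B != C] /\
    nw_proj w1 A = nw_proj w1 B /\ nw_proj w1 B = nw_proj w1 C /\
    nw_word w2 = x ++ [:: B; A] ++ y ++ [:: C; A] ++ z ++ [:: C; B] ++ t /\
    same_proj w1 w2.

Definition nw_step (w1 w2 : nanoword alpha) : Prop :=
  nw_iso w1 w2 \/ move1 w1 w2 \/ move2 w1 w2 \/ move3 w1 w2.

Definition homotopic (w1 w2 : nanoword alpha) : Prop :=
  clos_refl_sym_trans (nanoword alpha) nw_step w1 w2.

Lemma empty_nw_valid : all (fun a => (count_mem a (@nil nat) == 2) &&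
                                     isSome ((fun _ => @None alpha) a)) (@nil nat).
Proof. by []. Qed.
Definition empty_nw : nanoword alpha := Nanoword empty_nw_valid.

Definition contractible (w : nanoword alpha) : Prop := homotopic w empty_nw.

Lemma opp_valid (w : nanoword alpha) :
  all (fun a => (count_mem a (rev (nw_word w)) == 2) && isSome (nw_proj w a))
      (rev (nw_word w)).
Proof.
case: w => s p /= H; rewrite all_rev; apply/allP => a Ha.
by move/allP: H => /(_ a Ha); rewrite count_rev.
Qed.
Definition nw_opp (w : nanoword alpha) : nanoword alpha := Nanoword (opp_valid w).

Lemma inv_valid (w : nanoword alpha) :
  all (fun a => (count_mem a (nw_word w) == 2) &&
                isSome ((fun b => omap tau (nw_proj w b)) a)) (nw_word w).
Proof.
case: w => s p /= H; apply/allP => a Ha.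
by move/allP: H => /(_ a Ha); case: (p a).
Qed.
Definition nw_inv (w : nanoword alpha) : nanoword alpha := Nanoword (inv_valid w).

Definition nw_symmetric (w : nanoword alpha) : Prop := nw_iso w (nw_opp w).
Definition homotopically_symmetric (w : nanoword alpha) : Prop :=
  homotopic w (nw_opp w).
Definition homotopically_skew_symmetric (w : nanoword alpha) : Prop :=
  homotopic w (nw_opp (nw_inv w)).

End Nanowords.

(* Up to isomorphism, a nanoword of length at most 4 is empty, AA, AABB, ABBA or ABAB.  The
   first four contract by move (1), and so does ABAB when |B| = tau |A|, through an explicit
   sequence of moves via words of length 12.  Reversal and inversion preserve homotopy, so
   contractible words are homotopically symmetric and skew-symmetric.

   The remaining words ABAB are told apart from the empty word, their opposite and their
   inverse opposite by invariants of the form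
     sum_A chi |A| * g (sum_E weight (lk A E) * phi |E|),
   where lk A E is +1, -1 or 0 according as A and E occur as AEAE, EAEA or otherwise.  Such a
   sum is preserved by the moves modulo 2n as soon as phi and chi are tau-antisymmetric modulo
   m and n, g has period 2m, and for every letter value either (weight 1 + weight (-1)) * phi
   vanishes modulo m or chi vanishes modulo n.  If |A| = |B| = a <> tau a (and then ABAB is
   symmetric), weight = id, phi = chi = [a] - [tau a] and g = [2] take the values 2 on the
   word, -2 on its inverse opposite and 0 on the empty word.  If |B| is neither |A| nor
   tau |A|, weight = [1], phi and chi the indicators of the tau-orbits of |B| and |A|, and
   g = [2 mod 4] take the value 2 on the word and 0 modulo 4 on its opposite, its inverse
   opposite and the empty word. *)

From mathcomp Require Import all_boot all_algebra zify ring.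
From Stdlib Require Import Relations.Relation_Operators ClassicalEpsilon Classical.
Set Implicit Arguments. Unset Strict Implicit. Unset Printing Implicit Defensive.
Import GRing.Theory.
Local Open Scope ring_scope.

Definition link_pattern (s : seq nat) (A B : nat) : seq bool :=
  [seq x == A | x <- s & (x == A) || (x == B)].

Definition pattern_sign (l : seq bool) : int :=
  if l == [:: true; false; true; false] then 1
  else if l == [:: false; true; false; true] then -1 else 0.

Definition linking (s : seq nat) (A B : nat) : int := pattern_sign (link_pattern s A B).

Lemma link_pattern_cat s1 s2 A B :
  link_pattern (s1 ++ s2) A B = link_pattern s1 A B ++ link_pattern s2 A B.
Proof. by rewrite /link_pattern filter_cat map_cat. Qed.

Lemma link_pattern_absent s A B : A \notin s -> B \notin s -> link_pattern s A B = [::].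
Proof.
move=> As Bs; rewrite /link_pattern (@eq_in_filter _ _ pred0) ?filter_pred0 // => x xs.
by apply/negbTE/negP => /orP[]/eqP eq; [move: As | move: Bs]; rewrite -eq xs.
Qed.

Lemma link_pattern_absent_left s A B :
  A \notin s -> link_pattern s A B = nseq (count_mem B s) false.
Proof.
elim: s => //= x s IH; rewrite inE negb_or eq_sym => /andP[xA As].
rewrite /link_pattern /= (negbTE xA) /=.
by case: (eqVneq x B) => _ /=; rewrite add0n -/(link_pattern s A B) IH // (negbTE xA).
Qed.

Lemma link_pattern_absent_right s A B :
  B \notin s -> link_pattern s A B = nseq (count_mem A s) true.
Proof.
elim: s => //= x s IH; rewrite inE negb_or eq_sym => /andP[xB Bs].
rewrite /link_pattern /= (negbTE xB) orbF.
by case: (eqVneq x A) => [->|_] /=; rewrite add0n -/(link_pattern s A B) IH // eqxx.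
Qed.

Lemma link_pattern_map (f : nat -> nat) s A B :
  {in s &, injective f} -> A \in s -> B \in s ->
  link_pattern (map f s) (f A) (f B) = link_pattern s A B.
Proof.
move=> inj_f As Bs; have eqf := inj_in_eq inj_f.
rewrite /link_pattern filter_map -map_comp.
rewrite (@eq_in_filter _ _ (fun x => (x == A) || (x == B))) => [|x xs]; last by rewrite /= !eqf.
by apply/eq_in_map => x; rewrite mem_filter => /andP[_ xs] /=; rewrite eqf.
Qed.

Lemma link_pattern_swap u v X Y : u != v -> X \notin [:: u; v] ->
  link_pattern [:: u; v] X Y = link_pattern [:: v; u] X Y.
Proof.
rewrite !inE negb_or => uv /andP[Xu Xv]; rewrite /link_pattern /=.
rewrite ![_ == X]eq_sym (negbTE Xu) (negbTE Xv) /=.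
case: (eqVneq u Y) => [uY|]; case: (eqVneq v Y) => [vY|] //=.
by move: uv; rewrite uY vY eqxx.
Qed.

Lemma pattern_sign_repeat l1 b l2 : pattern_sign (l1 ++ b :: b :: l2) = 0.
Proof.
rewrite /pattern_sign.
by case: b; case: l1 => [|[] [|[] [|[] [|[] l1]]]] //=; case: l2 => [|[] [|[] l2]]; case: l1.
Qed.

Lemma pattern_sign_negb l : pattern_sign (map negb l) = - pattern_sign l.
Proof. by case: l => [|[] [|[] [|[] [|[] [|]]]]]. Qed.

Lemma linking_self s A : linking s A A = 0.
Proof.
rewrite /linking; have -> : link_pattern s A A = nseq (count_mem A s) true.
  elim: s => //= x s IH; rewrite /link_pattern /= orbb.
  by case: eqVneq => [->|] /=; rewrite -/(link_pattern s A A) IH add0n ?eqxx.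
by case: count => [|[|[|[|[|]]]]].
Qed.

Lemma linkingC s A B : linking s B A = - linking s A B.
Proof.
have [->|AB] := eqVneq A B; first by rewrite linking_self oppr0.
rewrite /linking -pattern_sign_negb /link_pattern -map_comp.
rewrite (@eq_filter _ _ (fun x => (x == A) || (x == B))) => [|x]; last by rewrite orbC.
congr pattern_sign; apply/eq_in_map => x; rewrite mem_filter => /andP[/orP[]/eqP-> _] /=.
  by rewrite eqxx (negbTE AB).
by rewrite eqxx eq_sym (negbTE AB).
Qed.

Section Move1Linking.
Variables (x y : seq nat) (A : nat).

Lemma linking_move1_left E : A \notin x ++ y -> linking (x ++ [:: A; A] ++ y) A E = 0.
Proof.
rewrite mem_cat negb_or => /andP[Ax Ay].
rewrite /linking !link_pattern_cat (link_pattern_absent_left E Ax).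
by rewrite (link_pattern_absent_left E Ay) /link_pattern /= eqxx pattern_sign_repeat.
Qed.

Lemma linking_move1_right D : A \notin x ++ y -> linking (x ++ [:: A; A] ++ y) D A = 0.
Proof. by move=> Axy; rewrite linkingC linking_move1_left ?oppr0. Qed.

Lemma linking_move1_fresh D E : D != A -> E != A ->
  linking (x ++ [:: A; A] ++ y) D E = linking (x ++ y) D E.
Proof.
move=> DA EA; rewrite /linking !link_pattern_cat (@link_pattern_absent [:: A; A]) //.
all: by rewrite !inE negb_or ?DA ?EA.
Qed.
End Move1Linking.

Section Move2Linking.
Variables (x y z : seq nat) (A B : nat).
Hypotheses (AB : A != B) (Ar : A \notin x ++ y ++ z) (Br : B \notin x ++ y ++ z).
Local Notation s := (x ++ [:: A; B] ++ y ++ [:: B; A] ++ z).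

Lemma linking_move2_fresh D E : D \notin [:: A; B] -> E \notin [:: A; B] ->
  linking s D E = linking (x ++ y ++ z) D E.
Proof.
rewrite !inE !negb_or => /andP[DA DB] /andP[EA EB].
rewrite /linking !link_pattern_cat (@link_pattern_absent [:: A; B]).
  rewrite (@link_pattern_absent [:: B; A]) //.
all: by rewrite !inE negb_or ?DA ?DB ?EA ?EB.
Qed.

Lemma linking_move2_right D : D \notin [:: A; B] -> linking s D A = linking s D B.
Proof.
rewrite !inE negb_or => /andP[DA DB].
have [AD BD] : (A == D) = false /\ (B == D) = false.
  by rewrite ![_ == D]eq_sym !(negbTE DA, negbTE DB).
move: Ar Br; rewrite !mem_cat !negb_or => /and3P[Ax Ay Az] /and3P[Bx By Bz].
have ABf := negbTE AB; have BAf : (B == A) = false by rewrite eq_sym ABf.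
rewrite /linking !link_pattern_cat !(@link_pattern_absent_right x) //.
rewrite !(@link_pattern_absent_right y) // !(@link_pattern_absent_right z) //.
by rewrite /link_pattern /= AD BD ABf BAf !eqxx /= AD BD.
Qed.

Lemma linking_move2_pair : linking s A B = 0.
Proof.
have BA : (B == A) = false by rewrite eq_sym (negbTE AB).
move: Ar Br; rewrite !mem_cat !negb_or => /and3P[Ax Ay Az] /and3P[Bx By Bz].
rewrite /linking !link_pattern_cat !(@link_pattern_absent x) //.
rewrite !(@link_pattern_absent y) // !(@link_pattern_absent z) //.
by rewrite /link_pattern /= !eqxx BA /= eqxx BA.
Qed.

Lemma linking_move2_left E : linking s A E = linking s B E.
Proof.
have [->|EA] := eqVneq E A; first by rewrite linking_self linkingC linking_move2_pair oppr0.
have [->|EB] := eqVneq E B; first by rewrite linking_self linking_move2_pair.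
by rewrite linkingC [RHS]linkingC linking_move2_right // !inE negb_or EA EB.
Qed.
End Move2Linking.

Section Move3Linking.
Variables (x y z t : seq nat) (A B C : nat).
Hypotheses (AB : A != B) (AC : A != C) (BC : B != C).
Hypotheses (Ar : A \notin x ++ y ++ z ++ t) (Br : B \notin x ++ y ++ z ++ t)
  (Cr : C \notin x ++ y ++ z ++ t).
Local Notation s1 := (x ++ [:: A; B] ++ y ++ [:: A; C] ++ z ++ [:: B; C] ++ t).
Local Notation s2 := (x ++ [:: B; A] ++ y ++ [:: C; A] ++ z ++ [:: C; B] ++ t).

Lemma linking_move3_fresh D E : D \notin [:: A; B; C] -> linking s1 D E = linking s2 D E.
Proof.
rewrite !inE !negb_or => /and3P[DA DB DC].
rewrite /linking !link_pattern_cat !(@link_pattern_swap A) ?(@link_pattern_swap B C) //.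
all: by rewrite !inE negb_or ?DA ?DB ?DC.
Qed.

Lemma linking_move3_values :
  [/\ linking s1 A B = 1, linking s1 A C = 0, linking s1 B C = 1,
      linking s2 A B = 0 & linking s2 A C = 1] /\ linking s2 B C = 0.
Proof.
have ABf := negbTE AB; have ACf := negbTE AC; have BCf := negbTE BC.
have BAf : (B == A) = false by rewrite eq_sym ABf.
have CAf : (C == A) = false by rewrite eq_sym ACf.
have CBf : (C == B) = false by rewrite eq_sym BCf.
move: Ar Br Cr; rewrite !mem_cat !negb_or.
move=> /and4P[Ax Ay Az At] /and4P[Bx By Bz Bt] /and4P[Cx Cy Cz Ct].
rewrite /linking !link_pattern_cat !(@link_pattern_absent x) // !(@link_pattern_absent y) //.
rewrite !(@link_pattern_absent z) // !(@link_pattern_absent t) //.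
by rewrite /link_pattern /= !(eqxx, ABf, ACf, BCf, BAf, CAf, CBf) /= !(eqxx, BAf, CAf, CBf).
Qed.
End Move3Linking.

Lemma eq_modzMDl (q d a b : int) : a = q * d + b -> (a = b %[mod d])%Z.
Proof. by move->; rewrite modzMDl. Qed.

Lemma nw_count (alpha : Type) (w : nanoword alpha) A :
  A \in nw_word w -> count_mem A (nw_word w) = 2.
Proof. by move/allP: (nw_valid w) => valid /valid /andP[/eqP]. Qed.

Lemma nw_fresh (alpha : Type) (w : nanoword alpha) (u r : seq nat) A :
  (forall c, count_mem c (nw_word w) = count_mem c u + count_mem c r) ->
  count_mem A u = 2 -> A \notin r.
Proof.
move=> split_w uA; apply/count_memPn.
have /nw_count : A \in nw_word w by rewrite -has_pred1 has_count split_w uA.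
by rewrite split_w uA => /eqP; rewrite -{2}[2%N]addn0 eqn_add2l => /eqP.
Qed.

Section LinkingInvariant.
Variables (alpha : Type) (tau : alpha -> alpha).
Variables (weight : int -> int) (phi chi : option alpha -> int) (g : int -> int) (m n : int).

(* Both sums run over occurrences, so that every letter counts twice: hence the moduli
   [2 * m] and [2 * n] below. *)
Definition letter_link (s : seq nat) (p : nat -> option alpha) (A : nat) : int :=
  \sum_(E <- s) weight (linking s A E) * phi (p E).

Definition word_invariant (s : seq nat) (p : nat -> option alpha) : int :=
  \sum_(A <- s) chi (p A) * g (letter_link s p A).

Definition nw_invariant (w : nanoword alpha) : int := word_invariant (nw_word w) (nw_proj w).

Lemma word_invariant_eq_proj s p1 p2 :
  {in s, p1 =1 p2} -> word_invariant s p1 = word_invariant s p2.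
Proof.
move=> p12; apply: eq_big_seq => A As; rewrite p12 //; congr (_ * g _).
by apply: eq_big_seq => E Es; rewrite p12.
Qed.

Lemma word_invariant_map (f : nat -> nat) s p1 p2 :
  {in s &, injective f} -> {in s, forall A, p2 (f A) = p1 A} ->
  word_invariant (map f s) p2 = word_invariant s p1.
Proof.
move=> inj_f p12; rewrite /word_invariant big_map; apply: eq_big_seq => A As.
rewrite p12 //; congr (_ * g _); rewrite /letter_link big_map; apply: eq_big_seq => E Es.
by rewrite /linking link_pattern_map // p12.
Qed.

Hypothesis weight0 : weight 0 = 0.
Hypothesis g0 : g 0 = 0.

Lemma word_invariant_move1 x y A p : A \notin x ++ y ->
  word_invariant (x ++ [:: A; A] ++ y) p = word_invariant (x ++ y) p.
Proof.
move=> Ar; set s := x ++ _.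
have perm_s : perm_eq s ([:: A; A] ++ x ++ y).
  by apply/permP => q; rewrite !count_cat /=; lia.
have rA D : D \in x ++ y -> D != A by apply: contraTneq => ->.
have linkA : letter_link s p A = 0.
  by rewrite /letter_link big1_seq // => E _; rewrite linking_move1_left // weight0 mul0r.
have linkD D : D \in x ++ y -> letter_link s p D = letter_link (x ++ y) p D.
  move=> Dr; rewrite /letter_link (perm_big _ perm_s) big_cat /= !big_cons big_nil.
  rewrite linking_move1_right // weight0 !mul0r !add0r.
  by apply: eq_big_seq => E Er; rewrite linking_move1_fresh ?rA.
rewrite /word_invariant (perm_big _ perm_s) big_cat /= !big_cons big_nil.
rewrite linkA g0 mulr0 !add0r.
by apply: eq_big_seq => D Dr; rewrite linkD.
Qed.

Lemma word_invariant_ABAB A B p : A != B ->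
  word_invariant [:: A; B; A; B] p
  = 2 * chi (p A) * g (2 * (weight 1 * phi (p B)))
    + 2 * chi (p B) * g (2 * (weight (-1) * phi (p A))).
Proof.
move=> AB; have BA : (B == A) = false by rewrite eq_sym; apply/negbTE.
have lAB : linking [:: A; B; A; B] A B = 1.
  by rewrite /linking /link_pattern /= !eqxx BA /= eqxx BA.
have lBA : linking [:: A; B; A; B] B A = -1 by rewrite linkingC lAB.
rewrite /word_invariant /letter_link !big_cons !big_nil !linking_self lAB lBA weight0.
have twice (u : int) : u + u = 2 * u by ring.
by rewrite !mul0r !add0r !addr0 !twice; ring.
Qed.

Hypothesis phi_tau : forall o, (m %| phi (omap tau o) + phi o)%Z.
Hypothesis chi_tau : forall o, (n %| chi (omap tau o) + chi o)%Z.
Hypothesis g_mod : forall u v, (u = v %[mod 2 * m])%Z -> g u = g v.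

Lemma word_invariant_move2 x y z A B p :
  A != B -> A \notin x ++ y ++ z -> B \notin x ++ y ++ z -> p B = omap tau (p A) ->
  (word_invariant (x ++ [:: A; B] ++ y ++ [:: B; A] ++ z) p
   = word_invariant (x ++ y ++ z) p %[mod 2 * n])%Z.
Proof.
move=> AB Ar Br pB; set s := x ++ _; set r := x ++ y ++ z.
have perm_s : perm_eq s ([:: A; B; B; A] ++ r).
  by apply/permP => q; rewrite !count_cat /=; lia.
have fresh D : D \in r -> D \notin [:: A; B].
  by move=> Dr; rewrite !inE negb_or; apply/andP; split; apply: contraTneq Dr => ->.
have [k phiAB] : exists k, phi (p B) + phi (p A) = k * m by apply/dvdzP; rewrite pB.
have [l chiAB] : exists l, chi (p B) + chi (p A) = l * n by apply/dvdzP; rewrite pB.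
have linkD D : D \in r ->
    letter_link s p D = (k * weight (linking s D A)) * (2 * m) + letter_link r p D.
  move=> Dr; rewrite /letter_link (perm_big _ perm_s) big_cat /= !big_cons big_nil.
  rewrite -linking_move2_right ?fresh //.
  rewrite (@eq_big_seq _ _ _ _ r _ (fun E => weight (linking r D E) * phi (p E))); last first.
    by move=> E Er; rewrite linking_move2_fresh ?fresh.
  have -> : phi (p B) = k * m - phi (p A) by rewrite -phiAB addrK.
  ring.
have linkAB : letter_link s p A = letter_link s p B.
  by apply: eq_bigr => E _; rewrite linking_move2_left.
rewrite /word_invariant (perm_big _ perm_s) big_cat /= !big_cons big_nil -linkAB.
rewrite (@eq_big_seq _ _ _ _ r _ (fun D => chi (p D) * g (letter_link r p D))); last first.
  by move=> D Dr; rewrite linkD // (g_mod (modzMDl _ _ _)).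
have -> : chi (p B) = l * n - chi (p A) by rewrite -chiAB addrK.
by apply: (@eq_modzMDl (l * g (letter_link s p A))); ring.
Qed.

Hypothesis move3_cond :
  forall o, (m %| (weight 1 + weight (-1)) * phi o)%Z \/ (n %| chi o)%Z.

Section Move3.
Variables (x y z t : seq nat) (A B C : nat) (p : nat -> option alpha).
Hypotheses (AB : A != B) (AC : A != C) (BC : B != C).
Hypotheses (Ar : A \notin x ++ y ++ z ++ t) (Br : B \notin x ++ y ++ z ++ t)
  (Cr : C \notin x ++ y ++ z ++ t).
Hypotheses (pAB : p A = p B) (pBC : p B = p C).
Local Notation r := (x ++ y ++ z ++ t).
Local Notation s1 := (x ++ [:: A; B] ++ y ++ [:: A; C] ++ z ++ [:: B; C] ++ t).
Local Notation s2 := (x ++ [:: B; A] ++ y ++ [:: C; A] ++ z ++ [:: C; B] ++ t).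

Let perm_s1 : perm_eq s1 ([:: A; B; A; C; B; C] ++ r).
Proof. by apply/permP => q; rewrite !count_cat /=; lia. Qed.

Let perm_s2 : perm_eq s2 ([:: B; A; C; A; C; B] ++ r).
Proof. by apply/permP => q; rewrite !count_cat /=; lia. Qed.

Let fresh D : D \in r -> D \notin [:: A; B; C].
Proof.
by move=> Dr; rewrite !inE !negb_or; apply/and3P; split; apply: contraTneq Dr => ->.
Qed.

Let W s X := weight (linking s X A) + weight (linking s X B) + weight (linking s X C).

Lemma letter_link_move3 X :
  letter_link s1 p X = 2 * phi (p A) * (W s1 X - W s2 X) + letter_link s2 p X.
Proof.
rewrite /letter_link (perm_big _ perm_s1) (perm_big _ perm_s2) big_cat [in RHS]big_cat /=.
rewrite (@eq_big_seq _ _ _ _ r _ (fun E => weight (linking s2 X E) * phi (p E))); last first.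
  by move=> E Er; rewrite linkingC [in RHS]linkingC linking_move3_fresh ?fresh.
by rewrite !big_cons !big_nil /W -pBC -pAB; ring.
Qed.

Lemma word_invariant_move3 : (word_invariant s1 p = word_invariant s2 p %[mod 2 * n])%Z.
Proof.
have [[l1AB l1AC l1BC l2AB l2AC] l2BC] := linking_move3_values AB AC BC Ar Br Cr.
have linkD D : D \in r -> letter_link s1 p D = letter_link s2 p D.
  by move=> Dr; rewrite letter_link_move3 /W !linking_move3_fresh ?fresh // subrr mulr0 add0r.
have linkA : letter_link s1 p A = letter_link s2 p A.
  by rewrite letter_link_move3 /W !linking_self l1AB l1AC l2AB l2AC; ring.
have linkC : letter_link s1 p C = letter_link s2 p C.
  rewrite letter_link_move3 /W !linking_self !(linkingC _ _ C) l1AC l1BC l2AC l2BC oppr0.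
  ring.
have linkB : letter_link s1 p B
    = (weight 1 + weight (-1)) * phi (p A) * 2 + letter_link s2 p B.
  rewrite letter_link_move3 /W !linking_self !(linkingC _ A B) l1AB l1BC l2AB l2BC weight0.
  ring.
set L1 := g (letter_link s1 p B); set L2 := g (letter_link s2 p B).
have -> : word_invariant s1 p = chi (p A) * (L1 - L2) * 2 + word_invariant s2 p.
  rewrite /word_invariant (perm_big _ perm_s1) (perm_big _ perm_s2) big_cat [in RHS]big_cat /=.
  rewrite (@eq_big_seq _ _ _ _ r _ (fun D => chi (p D) * g (letter_link s2 p D))); last first.
    by move=> D Dr; rewrite linkD.
  rewrite !big_cons !big_nil linkA linkC -pBC -pAB.
  ring.
case: (move3_cond (p A)) => /dvdzP[q Hq].
  rewrite /L1 linkB Hq -[q * m * 2]mulrA [m * 2]mulrC (g_mod (modzMDl _ _ _)).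
  by rewrite subrr mulr0 mul0r add0r.
by apply: (@eq_modzMDl (q * (L1 - L2))); rewrite Hq; ring.
Qed.
End Move3.

Lemma nw_invariant_step w1 w2 :
  nw_step tau w1 w2 -> (nw_invariant w1 = nw_invariant w2 %[mod 2 * n])%Z.
Proof.
rewrite /nw_invariant; case=> [[f [inj_f [<- proj_f]]]|[|[]]].
- by rewrite (word_invariant_map inj_f proj_f).
- case=> A [x [y [E1 [E2 proj2]]]]; rewrite (word_invariant_eq_proj proj2) E1 E2.
  have split_w c : count_mem c (nw_word w1) = count_mem c [:: A; A] + count_mem c (x ++ y).
    by rewrite E1 !count_cat /=; lia.
  by rewrite word_invariant_move1 //; apply: (nw_fresh split_w); rewrite /= eqxx.
- case=> A [B [x [y [z [E1 [AB [pB [E2 proj2]]]]]]]].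
  rewrite (word_invariant_eq_proj proj2) E1 E2.
  have BAf : (B == A) = false by rewrite eq_sym; apply/negbTE.
  have split_w c : count_mem c (nw_word w1)
      = count_mem c [:: A; B; B; A] + count_mem c (x ++ y ++ z).
    by rewrite E1 !count_cat /=; lia.
  by apply: word_invariant_move2 => //; apply: (nw_fresh split_w);
    rewrite /= !eqxx ?BAf ?(negbTE AB).
- case=> A [B [C [x [y [z [t [E1 [/and3P[AB AC BC] [pAB [pBC [E2 proj2]]]]]]]]]]].
  rewrite (word_invariant_eq_proj proj2) E1 E2.
  have ABf := negbTE AB; have ACf := negbTE AC; have BCf := negbTE BC.
  have BAf : (B == A) = false by rewrite eq_sym ABf.
  have CAf : (C == A) = false by rewrite eq_sym ACf.
  have CBf : (C == B) = false by rewrite eq_sym BCf.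
  have split_w c : count_mem c (nw_word w1)
      = count_mem c [:: A; B; A; C; B; C] + count_mem c (x ++ y ++ z ++ t).
    by rewrite E1 !count_cat /=; lia.
  apply: word_invariant_move3 => //; apply: (nw_fresh split_w).
  all: by rewrite /= !eqxx ?ABf ?ACf ?BCf ?BAf ?CAf ?CBf.
Qed.

Lemma nw_invariant_homotopic w1 w2 :
  homotopic tau w1 w2 -> (nw_invariant w1 = nw_invariant w2 %[mod 2 * n])%Z.
Proof.
elim=> {w1 w2} [w1 w2 /nw_invariant_step //| // | w1 w2 _ -> // | w1 w2 w3 _ -> _ -> //].
Qed.
End LinkingInvariant.

Definition indicator (P : Prop) : int := if excluded_middle_informative P then 1 else 0.

Lemma indicator1 (P : Prop) : P -> indicator P = 1.
Proof. by rewrite /indicator; case: excluded_middle_informative. Qed.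

Lemma indicator0 (P : Prop) : ~ P -> indicator P = 0.
Proof. by rewrite /indicator; case: excluded_middle_informative. Qed.

Lemma eq_indicator (P Q : Prop) : (P <-> Q) -> indicator P = indicator Q.
Proof.
move=> PQ; have [p|np] := classic P; first by rewrite !indicator1 //; apply/PQ.
by rewrite !indicator0 // => /PQ.
Qed.

Section EqualLettersInvariant.
Variables (alpha : Type) (tau : alpha -> alpha) (a : alpha).
Hypothesis Htau : involutive tau.

Definition tau_sign (o : option alpha) : int :=
  indicator (o = Some a) - indicator (o = Some (tau a)).

Definition sign_invariant : nanoword alpha -> int :=
  nw_invariant id tau_sign tau_sign (fun v => (v == 2)%:R).

Lemma tau_sign_omap o : tau_sign (omap tau o) = - tau_sign o.
Proof.
case: o => [c|]; last by rewrite /tau_sign !indicator0 // subrr oppr0.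
rewrite /tau_sign /= opprB; congr (_ - _); apply: eq_indicator; split=> -[e]; congr Some.
- by rewrite -e Htau.
- by rewrite e Htau.
- exact: (inv_inj Htau).
- by rewrite e.
Qed.

Lemma sign_invariant_homotopic w1 w2 :
  homotopic tau w1 w2 -> sign_invariant w1 = sign_invariant w2.
Proof.
have sign_tau o : (0 %| tau_sign (omap tau o) + tau_sign o)%Z by rewrite tau_sign_omap addNr.
have g_mod (u v : int) : (u = v %[mod 2 * 0])%Z -> (u == 2)%:R = (v == 2)%:R :> int.
  by rewrite mulr0 !modz0 => ->.
have weights_cancel o : (0 %| (id 1 + id (-1)) * tau_sign o)%Z \/ (0 %| tau_sign o)%Z.
  by left; rewrite addrN mul0r.
move/(nw_invariant_homotopic (erefl : id 0 = 0) erefl sign_tau sign_tau g_mod weights_cancel).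
by rewrite mulr0 !modz0.
Qed.

Lemma ABAB_equal_letters_obstruction w A B :
  a <> tau a -> A != B -> nw_word w = [:: A; B; A; B] ->
  nw_proj w A = Some a -> nw_proj w B = Some a ->
  ~ contractible tau w /\ ~ homotopically_skew_symmetric tau w.
Proof.
move=> a_tau AB E pA pB; have BA : B != A by rewrite eq_sym.
have sign_a : tau_sign (Some a) = 1 by rewrite /tau_sign indicator1 // indicator0 // => -[].
have sign_tau_a : tau_sign (Some (tau a)) = -1.
  by rewrite -[Some _]/(omap tau (Some a)) tau_sign_omap sign_a.
have inv_w : sign_invariant w = 2.
  by rewrite /sign_invariant /nw_invariant E word_invariant_ABAB // pA pB sign_a.
have inv_skew : sign_invariant (nw_opp (nw_inv tau w)) = -2.
  by rewrite /sign_invariant /nw_invariant /= E /= word_invariant_ABAB //= pA pB sign_tau_a.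
have inv_nil : sign_invariant (empty_nw alpha) = 0.
  by rewrite /sign_invariant /nw_invariant /= /word_invariant big_nil.
by split=> /sign_invariant_homotopic; rewrite inv_w ?inv_skew ?inv_nil.
Qed.
End EqualLettersInvariant.

Section UnrelatedLettersInvariant.
Variables (alpha : Type) (tau : alpha -> alpha) (a b : alpha).
Hypotheses (Htau : involutive tau) (ba : b <> a) (b_tau_a : b <> tau a).

Definition orbit_indicator (c : alpha) (o : option alpha) : int :=
  indicator (o = Some c \/ o = Some (tau c)).

Definition orbit_invariant : nanoword alpha -> int :=
  nw_invariant (fun v => (v == 1)%:R) (orbit_indicator b) (orbit_indicator a)
    (fun v => ((v %% 4)%Z == 2)%:R).

Lemma orbit_indicator_omap c o : orbit_indicator c (omap tau o) = orbit_indicator c o.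
Proof.
case: o => [d|] //; apply: eq_indicator => /=.
split=> -[[e]|[e]]; [right | left | right | left]; congr Some.
- by rewrite -e Htau.
- exact: (inv_inj Htau).
- by rewrite e.
- by rewrite e Htau.
Qed.

Lemma orbit_indicator_disjoint o :
  orbit_indicator b o = 0 \/ orbit_indicator a o = 0.
Proof.
have [o_b|o_b] := classic (o = Some b \/ o = Some (tau b)); last by left; apply: indicator0.
right; apply: indicator0; case: o_b => -> [[e]|[e]].
- exact: ba.
- exact: b_tau_a.
- by apply: b_tau_a; rewrite -e Htau.
- by apply: ba; apply: (inv_inj Htau).
Qed.

Lemma orbit_invariant_homotopic w1 w2 :
  homotopic tau w1 w2 -> (orbit_invariant w1 = orbit_invariant w2 %[mod 4])%Z.
Proof.
have orbit_tau c o : (2 %| orbit_indicator c (omap tau o) + orbit_indicator c o)%Z.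
  by apply/dvdzP; exists (orbit_indicator c o); rewrite orbit_indicator_omap; ring.
have g_mod (u v : int) : (u = v %[mod 2 * 2])%Z ->
  ((u %% 4)%Z == 2)%:R = ((v %% 4)%Z == 2)%:R :> int by move->.
have disjoint o : (2 %| ((1 == 1)%:R + (-1 == 1)%:R) * orbit_indicator b o)%Z
                  \/ (2 %| orbit_indicator a o)%Z.
  by case: (orbit_indicator_disjoint o) => ->; [left | right]; rewrite ?mulr0 ?dvdz0.
exact: (nw_invariant_homotopic erefl erefl (orbit_tau b) (orbit_tau a) g_mod disjoint).
Qed.

Lemma ABAB_unrelated_letters_obstruction w A B :
  A != B -> nw_word w = [:: A; B; A; B] -> nw_proj w A = Some a -> nw_proj w B = Some b ->
  [/\ ~ contractible tau w, ~ homotopically_skew_symmetric tau w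
    & ~ homotopically_symmetric tau w].
Proof.
move=> AB E pA pB; have BA : B != A by rewrite eq_sym.
have chi_a : orbit_indicator a (Some a) = 1 by apply: indicator1; left.
have phi_b : orbit_indicator b (Some b) = 1 by apply: indicator1; left.
have chi_b : orbit_indicator a (Some b) = 0.
  by case: (orbit_indicator_disjoint (Some b)) => //; rewrite phi_b.
have omap_tau c d : orbit_indicator c (Some (tau d)) = orbit_indicator c (Some d).
  exact: (orbit_indicator_omap c (Some d)).
have inv_w : orbit_invariant w = 2.
  rewrite /orbit_invariant /nw_invariant E word_invariant_ABAB // pA pB chi_a chi_b phi_b.
  by rewrite mulr0 mul0r addr0.
have inv_opp : orbit_invariant (nw_opp w) = 0.
  rewrite /orbit_invariant /nw_invariant /= E /= word_invariant_ABAB // pA pB chi_a chi_b phi_b.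
  by rewrite mulr0 mul0r add0r.
have inv_skew : orbit_invariant (nw_opp (nw_inv tau w)) = 0.
  rewrite /orbit_invariant /nw_invariant /= E /= word_invariant_ABAB //= pA pB.
  by rewrite !omap_tau chi_a chi_b phi_b mulr0 mul0r add0r.
have inv_nil : orbit_invariant (empty_nw alpha) = 0.
  by rewrite /orbit_invariant /nw_invariant /= /word_invariant big_nil.
by split=> /orbit_invariant_homotopic; rewrite inv_w ?inv_opp ?inv_skew ?inv_nil.
Qed.
End UnrelatedLettersInvariant.

Local Close Scope ring_scope.

Section HomotopyOperations.
Variables (alpha : Type) (tau : alpha -> alpha).

Lemma homotopic_step_trans (w1 w2 w3 : nanoword alpha) :
  nw_step tau w1 w2 -> homotopic tau w2 w3 -> homotopic tau w1 w3.
Proof. by move=> s12; apply: rst_trans; apply: rst_step. Qed.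

Lemma homotopic_map (F : nanoword alpha -> nanoword alpha) :
  (forall w1 w2, nw_step tau w1 w2 -> nw_step tau (F w1) (F w2)) ->
  forall w1 w2, homotopic tau w1 w2 -> homotopic tau (F w1) (F w2).
Proof.
move=> F_step w1 w2; elim=> {w1 w2} [w1 w2 /F_step|w|w1 w2 _|w1 w2 w3 _ h12 _].
- exact: rst_step.
- exact: rst_refl.
- exact: rst_sym.
- exact: rst_trans h12.
Qed.

Lemma nw_step_opp w1 w2 : nw_step tau w1 w2 -> nw_step tau (nw_opp w1) (nw_opp w2).
Proof.
case=> [[f [inj_f [E proj_f]]]|[|[]]].
- left; exists f; split; last split.
  + by move=> a b; rewrite !mem_rev; apply: inj_f.
  + by rewrite /= map_rev E.
  + by move=> a; rewrite mem_rev; apply: proj_f.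
- case=> A [x [y [E1 [E2 proj2]]]]; right; left; exists A, (rev y), (rev x).
  rewrite /= E1 E2 !rev_cat -catA; do !split=> //.
  by move=> a; rewrite mem_rev; apply: proj2.
- case=> A [B [x [y [z [E1 [AB [pB [E2 proj2]]]]]]]].
  right; right; left; exists A, B, (rev z), (rev y), (rev x).
  rewrite /= E1 E2 !rev_cat -!catA; do !split=> //.
  by move=> a; rewrite mem_rev; apply: proj2.
- case=> A [B [C [x [y [z [t [E1 [/and3P[AB AC BC] [pAB [pBC [E2 proj2]]]]]]]]]]].
  right; right; right; exists C, B, A, (rev t), (rev z), (rev y), (rev x).
  rewrite /= E1 E2 !rev_cat -!catA /=; do !split=> //.
  + by rewrite eq_sym BC eq_sym AC eq_sym AB.
  + by move=> a; rewrite mem_rev; apply: proj2.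
Qed.

Lemma nw_step_inv w1 w2 : nw_step tau w1 w2 -> nw_step tau (nw_inv tau w1) (nw_inv tau w2).
Proof.
case=> [[f [inj_f [E proj_f]]]|[|[]]].
- left; exists f; do !split=> //.
  by move=> a /proj_f eq; rewrite /= eq.
- case=> A [x [y [E1 [E2 proj2]]]]; right; left; exists A, x, y; do !split=> //.
  by move=> a /proj2 eq; rewrite /= eq.
- case=> A [B [x [y [z [E1 [AB [pB [E2 proj2]]]]]]]].
  right; right; left; exists A, B, x, y, z.
  do !split=> //=; first by rewrite pB.
  by move=> a /proj2 eq; rewrite /= eq.
- case=> A [B [C [x [y [z [t [E1 [ABC [pAB [pBC [E2 proj2]]]]]]]]]]].
  right; right; right; exists A, B, C, x, y, z, t.
  do !split=> //=; [by rewrite pAB | by rewrite pBC |].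
  by move=> a /proj2 eq; rewrite /= eq.
Qed.

Lemma contractible_nil w : nw_word w = [::] -> contractible tau w.
Proof. by move=> E; apply: rst_step; left; exists id; rewrite E. Qed.

Lemma contractible_opp w : contractible tau w -> contractible tau (nw_opp w).
Proof.
move=> /(homotopic_map nw_step_opp) h; apply: rst_trans h _.
exact: contractible_nil.
Qed.

Lemma contractible_inv w : contractible tau w -> contractible tau (nw_inv tau w).
Proof.
move=> /(homotopic_map nw_step_inv) h; apply: rst_trans h _.
exact: contractible_nil.
Qed.

Lemma contractible_homotopically_symmetric w :
  contractible tau w -> homotopically_symmetric tau w.
Proof. by move=> c; apply: rst_trans c (rst_sym _ _ _ _ (contractible_opp c)). Qed.

Lemma contractible_homotopically_skew_symmetric w :
  contractible tau w -> homotopically_skew_symmetric tau w.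
Proof.
by move=> c; apply: rst_trans c (rst_sym _ _ _ _ (contractible_opp (contractible_inv c))).
Qed.

Lemma symmetric_homotopically_symmetric w :
  nw_symmetric w -> homotopically_symmetric tau w.
Proof. by move=> sym; apply: rst_step; left. Qed.
End HomotopyOperations.

Lemma mem_ABAB (A B c : nat) : c \in [:: A; B; A; B] -> c = A \/ c = B.
Proof. by rewrite !inE => /or4P[] /eqP; auto. Qed.

Section ShortContractible.
Variables (alpha : Type) (tau : alpha -> alpha).

Lemma contractible_AA w A : nw_word w = [:: A; A] -> contractible tau w.
Proof. by move=> E; apply: rst_step; right; left; exists A, [::], [::]; rewrite E. Qed.

Lemma nw_valid_AA (w : nanoword alpha) A : A \in nw_word w ->
  all (fun a => (count_mem a [:: A; A] == 2) && isSome (nw_proj w a)) [:: A; A].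
Proof. by move/allP: (nw_valid w) => valid /valid /andP[_ pA]; rewrite /= eqxx pA. Qed.

Lemma contractible_AABB w A B : nw_word w = [:: A; A; B; B] -> contractible tau w.
Proof.
move=> E; have B_in : B \in nw_word w by rewrite E !inE eqxx !orbT.
apply: (@homotopic_step_trans _ _ _ (Nanoword (nw_valid_AA B_in))); last exact: contractible_AA.
by right; left; exists A, [::], [:: B; B]; rewrite E.
Qed.

Lemma contractible_ABBA w A B : nw_word w = [:: A; B; B; A] -> contractible tau w.
Proof.
move=> E; have A_in : A \in nw_word w by rewrite E !inE eqxx.
apply: (@homotopic_step_trans _ _ _ (Nanoword (nw_valid_AA A_in))); last exact: contractible_AA.
by right; left; exists B, [:: A], [:: A]; rewrite E.
Qed.

Hypothesis Htau : involutive tau.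

Lemma contractible_ABAB w A B a : A != B -> nw_word w = [:: A; B; A; B] ->
  nw_proj w A = Some a -> nw_proj w B = Some (tau a) -> contractible tau w.
Proof.
move=> AB E pA pB.
pose P n := if odd n then Some (tau a) else Some a.
(* Two inverse moves (2) and a move (3) lead from [N0] to [N3], which then collapses by
   moves (2), (1), (2) and (1). *)
pose N0 := @Nanoword alpha [:: 0; 1; 0; 1] P isT.
pose N1 := @Nanoword alpha [:: 2; 3; 0; 1; 3; 2; 0; 1] P isT.
pose N2 := @Nanoword alpha [:: 2; 4; 5; 3; 0; 1; 3; 2; 0; 1; 5; 4] P isT.
pose N3 := @Nanoword alpha [:: 2; 4; 3; 5; 0; 3; 1; 2; 0; 5; 1; 4] P isT.
pose N4 := @Nanoword alpha [:: 2; 4; 3; 3; 1; 2; 1; 4] P isT.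
pose N5 := @Nanoword alpha [:: 2; 4; 1; 2; 1; 4] P isT.
pose N6 := @Nanoword alpha [:: 2; 2] P isT.
have N3N0 : homotopic tau N3 N0.
  apply: (@homotopic_step_trans _ _ _ N2).
    by right; right; right; exists 3, 5, 1, [:: 2; 4], [:: 0], [:: 2; 0], [:: 4].
  apply: (@homotopic_step_trans _ _ _ N1).
    by right; right; left; exists 4, 5, [:: 2], [:: 3; 0; 1; 3; 2; 0; 1], [::].
  apply: (@homotopic_step_trans _ _ _ N0); last exact: rst_refl.
  by right; right; left; exists 2, 3, [::], [:: 0; 1], [:: 0; 1].
have N3_contr : contractible tau N3.
  apply: (@homotopic_step_trans _ _ _ N4).
    right; right; left; exists 5, 0, [:: 2; 4; 3], [:: 3; 1; 2], [:: 1; 4].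
    by rewrite /= Htau.
  apply: (@homotopic_step_trans _ _ _ N5).
    by right; left; exists 3, [:: 2; 4], [:: 1; 2; 1; 4].
  apply: (@homotopic_step_trans _ _ _ N6); last exact: (@contractible_AA _ 2).
  by right; right; left; exists 4, 1, [:: 2], [:: 2], [::].
have w_N0 : nw_step tau w N0.
  have BA : (B == A) = false by rewrite eq_sym; apply/negbTE.
  have AB_cases c : c \in nw_word w -> c = A \/ c = B by rewrite E => /mem_ABAB.
  left; exists (fun c => if c == A then 0 else 1); do !split.
  - by move=> c d /AB_cases[] -> /AB_cases[] ->; rewrite ?eqxx ?BA.
  - by rewrite E /= eqxx BA.
  - by move=> c /AB_cases[] ->; rewrite ?eqxx ?BA /= ?pA ?pB.
apply: (homotopic_step_trans w_N0).
exact: rst_trans (rst_sym _ _ _ _ N3N0) N3_contr.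
Qed.
End ShortContractible.

Section ShortNanowords.
Variables (alpha : Type) (tau : alpha -> alpha).

Lemma nw_proj_some (w : nanoword alpha) A :
  A \in nw_word w -> exists a, nw_proj w A = Some a.
Proof.
by move/allP: (nw_valid w) => valid /valid /andP[_]; case: nw_proj => // a _; exists a.
Qed.

Lemma nanoword_le4_cases (w : nanoword alpha) : nw_length w <= 4 ->
  contractible tau w \/ exists A B, A != B /\ nw_word w = [:: A; B; A; B].
Proof.
rewrite /nw_length; move: (nw_valid w).
case E: (nw_word w) => [|x1 [|x2 [|x3 [|x4 [|x5 s]]]]] //= valid _.
- by left; apply: contractible_nil.
- by move: valid; rewrite eqxx.
- move: valid; case: (eqVneq x1 x2) => [e12 _|]; rewrite /= ?eqxx //.
  by left; apply: (@contractible_AA _ _ _ x1); rewrite E e12.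
- move: valid; case: (eqVneq x1 x2) => [e12|n12]; case: (eqVneq x1 x3) => [e13|n13];
    case: (eqVneq x2 x3) => [e23|n23]; rewrite /= ?eqxx ?andbF //=.
- move: valid; case: (eqVneq x1 x2) => [e12|n12]; case: (eqVneq x1 x3) => [e13|n13];
    case: (eqVneq x1 x4) => [e14|n14]; case: (eqVneq x2 x3) => [e23|n23];
    case: (eqVneq x2 x4) => [e24|n24]; case: (eqVneq x3 x4) => [e34|n34];
    rewrite /= ?eqxx ?andbF //= => _.
  + by left; apply: (@contractible_AABB _ _ _ x1 x3); rewrite E e12 e34.
  + by right; exists x1, x2; rewrite e13 e24.
  + by left; apply: (@contractible_ABBA _ _ _ x1 x2); rewrite E e14 e23.
Qed.

Lemma ABAB_symmetric (w : nanoword alpha) A B : A != B -> nw_word w = [:: A; B; A; B] ->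
  nw_proj w A = nw_proj w B -> nw_symmetric w.
Proof.
move=> AB E pAB; have BA : (B == A) = false by rewrite eq_sym; apply/negbTE.
have AB_cases c : c \in nw_word w -> c = A \/ c = B by rewrite E => /mem_ABAB.
exists (fun c => if c == A then B else A); do !split.
- by move=> c d /AB_cases[] -> /AB_cases[] ->; rewrite ?eqxx ?BA.
- by rewrite /= E /= eqxx BA.
- by move=> c /AB_cases[] ->; rewrite /= ?eqxx ?BA.
Qed.

Lemma short_nanoword_cases (w : nanoword alpha) : involutive tau -> nw_length w <= 4 ->
  contractible tau w \/ exists A B a b, [/\ A != B, nw_word w = [:: A; B; A; B],
    nw_proj w A = Some a, nw_proj w B = Some b & b <> tau a].
Proof.
move=> Htau /nanoword_le4_cases[|[A [B [AB E]]]]; first by left.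
have [a pA] : exists a, nw_proj w A = Some a by apply: nw_proj_some; rewrite E inE eqxx.
have [b pB] : exists b, nw_proj w B = Some b.
  by apply: nw_proj_some; rewrite E !inE eqxx orbT.
have [b_tau_a|b_tau_a] := classic (b = tau a); last by right; exists A, B, a, b.
by left; apply: (contractible_ABAB Htau AB E pA); rewrite pB b_tau_a.
Qed.
End ShortNanowords.

Theorem corollary8p4 (alpha : Type) (tau : alpha -> alpha)
  (Htau : involutive tau) (w : nanoword alpha) (Hlen : nw_length w <= 4) :
  (homotopically_skew_symmetric tau w <-> contractible tau w) /\
  (homotopically_symmetric tau w <-> contractible tau w \/ nw_symmetric w).
Proof.
have sym_hsym := @symmetric_homotopically_symmetric _ tau w.
case: (short_nanoword_cases Htau Hlen) => [c|[A [B [a [b [AB E pA pB b_tau_a]]]]]].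
  have := contractible_homotopically_symmetric c.
  have := contractible_homotopically_skew_symmetric c.
  tauto.
case: (classic (b = a)) => [ba|ba].
  subst b.
  have [not_contr not_skew] := ABAB_equal_letters_obstruction Htau b_tau_a AB E pA pB.
  have sym : nw_symmetric w by apply: (ABAB_symmetric AB E); rewrite pA pB.
  have := sym_hsym sym; tauto.
have [not_contr not_skew not_hsym] :=
  ABAB_unrelated_letters_obstruction Htau ba b_tau_a AB E pA pB.
tauto.
Qed.
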